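(* Let $\mathfrak g$ be a simple Lie superalgebra with an invariant supersymmetric bilinear form $(\cdot|\cdot)$, let $x\in\mathfrak g$, and let $\phi$ be a conjugate-linear involution of $\mathfrak g$ such that $(x|x)$ is a non-zero real number and $\phi(x)=x$. Then $\overline{(\phi(a)|\phi(b))}=(a|b)$ for all $a,b\in\mathfrak g$.
   Context: A conjugate-linear involution of a Lie superalgebra is a conjugate-linear, parity-preserving bijection $\phi$ with $\phi([a,b])=[\phi(a),\phi(b)]$ and $\phi^2=\mathrm{id}$. *)

From mathcomp Require Import all_boot all_algebra complex reals.
Set Implicit Arguments. Unset Strict Implicit. Unset Printing Implicit Defensive.
Import GRing.Theory Num.Theory.
Local Open Scope ring_scope.

(* A finite-dimensional complex super vector space is a vectType V over R[i]
   together with a linear idempotent p0 : V -> V, the projection onto the even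
   part V_0 along the odd part V_1 (so V_0 = im p0, V_1 = ker p0). *)

Section LieSuper.
Variables (R : realType).
Local Notation C := (R[i]).
Variable (V : vectType C).

Definition homog (p0 : V -> V) (i : bool) (a : V) : Prop :=
  if i then p0 a = 0 else p0 a = a.

Definition is_parity_proj (p0 : V -> V) : Prop :=
  (forall (k : C) a b, p0 (k *: a + b) = k *: p0 a + p0 b) /\
  (forall a, p0 (p0 a) = p0 a).

Definition ssign (i j : bool) : C := (-1) ^+ (i && j).

Definition is_lie_superalgebra (p0 : V -> V) (br : V -> V -> V) : Prop :=
  is_parity_proj p0 /\
  (forall (k : C) a a' b, br (k *: a + a') b = k *: br a b + br a' b) /\
  (forall (k : C) a b b', br a (k *: b + b') = k *: br a b + br a b') /\
  (forall i j a b, homog p0 i a -> homog p0 j b -> homog p0 (i (+) j) (br a b)) /\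
  (forall i j a b, homog p0 i a -> homog p0 j b ->
      br a b = - (ssign i j *: br b a)) /\
  (forall i j a b c, homog p0 i a -> homog p0 j b ->
      br a (br b c) = br (br a b) c + ssign i j *: br b (br a c)).

Definition graded_ideal (p0 : V -> V) (br : V -> V -> V) (I : {vspace V}) : Prop :=
  (forall v, v \in I -> p0 v \in I) /\ (forall a v, v \in I -> br a v \in I).

Definition simple_lie_superalgebra (p0 : V -> V) (br : V -> V -> V) : Prop :=
  is_lie_superalgebra p0 br /\
  (exists a b, br a b != 0) /\
  (forall I : {vspace V}, graded_ideal p0 br I -> I = 0%VS \/ I = fullv).

Definition invariant_supersymmetric_form (p0 : V -> V) (br : V -> V -> V)
    (form : V -> V -> C) : Prop :=
  (forall (k : C) a a' b, form (k *: a + a') b = k * form a b + form a' b) /\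
  (forall (k : C) a b b', form a (k *: b + b') = k * form a b + form a b') /\
  (forall i j a b, homog p0 i a -> homog p0 j b -> i != j -> form a b = 0) /\
  (forall i j a b, homog p0 i a -> homog p0 j b -> form a b = ssign i j * form b a) /\
  (forall a b c, form (br a b) c = form a (br b c)).

Definition conj_linear_involution (p0 : V -> V) (br : V -> V -> V) (phi : V -> V) : Prop :=
  (forall a b, phi (a + b) = phi a + phi b) /\
  (forall (k : C) a, phi (k *: a) = k^* *: phi a) /\
  (forall i a, homog p0 i a -> homog p0 i (phi a)) /\
  bijective phi /\
  (forall a b, phi (br a b) = br (phi a) (phi b)) /\
  (forall a, phi (phi a) = a).

End LieSuper.

From mathcomp Require Import all_boot all_algebra complex reals.
Import GRing.Theory Num.Theory VectorInternalTheory.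
Set Implicit Arguments.
Unset Strict Implicit.
Unset Printing Implicit Defensive.
Local Open Scope ring_scope.

(* Both [form] and the twisted form [G a b := (form (phi a) (phi b))^*] are
   invariant even bilinear forms on g.  The radical of such a form is a graded
   ideal, so by simplicity [form] is nondegenerate.  Over the algebraically
   closed field C some pencil [G - l form] is degenerate; its radical is then
   all of g, so [G = l form].  Evaluating at [x], where
   [G x x = (x|x)^* = (x|x) <> 0], yields [l = 1]. *)

Section BilinearForms.
Variables (K : fieldType) (V : vectType K).

Definition bilinear_form (F : V -> V -> K) : Prop :=
  (forall k a a' b, F (k *: a + a') b = k * F a b + F a' b) /\
  (forall k a b b', F a (k *: b + b') = k * F a b + F a b').

Definition basis_vec (j : 'I_(dim V)) : V := r2v (delta_mx 0 j).

Lemma functional_expand (f : V -> K) :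
    (forall k a b, f (k *: a + b) = k * f a + f b) ->
  forall a, f a = \sum_j v2r a 0 j * f (basis_vec j).
Proof.
move=> f_lin a.
have f0 : f 0 = 0.
  by apply: (addrI (f 0)); rewrite addr0 -{1}[f 0]mul1r -f_lin scale1r addr0.
have fD : {morph f : u v / u + v}.
  by move=> u v; have := f_lin 1 u v; rewrite scale1r mul1r.
have fZ k u : f (k *: u) = k * f u by rewrite -[k *: u]addr0 f_lin f0 addr0.
rewrite -{1}[a]v2rK {1}(row_sum_delta (v2r a)) linear_sum (big_morph f fD f0).
by apply: eq_bigr => j _; rewrite linearZ fZ.
Qed.

Definition gram (F : V -> V -> K) : 'M[K]_(dim V) :=
  \matrix_(i, j) F (basis_vec i) (basis_vec j).

Definition radical (F : V -> V -> K) : {vspace V} := mx2vs (kermx (gram F)).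

Variable F : V -> V -> K.
Hypothesis F_bil : bilinear_form F.

Lemma formZl k a b : F (k *: a) b = k * F a b.
Proof.
have F0 : F 0 b = 0.
  by apply: (addrI (F 0 b)); rewrite addr0 -{1}[F 0 b]mul1r -F_bil.1 scale1r addr0.
by rewrite -[k *: a]addr0 F_bil.1 F0 addr0.
Qed.

Lemma formDl a a' b : F (a + a') b = F a b + F a' b.
Proof. by have := F_bil.1 1 a a' b; rewrite scale1r mul1r. Qed.

Lemma formDr a b b' : F a (b + b') = F a b + F a b'.
Proof. by have := F_bil.2 1 a b b'; rewrite scale1r mul1r. Qed.

Lemma row_gram a : \row_j F a (basis_vec j) = v2r a *m gram F.
Proof.
apply/rowP => j; rewrite !mxE (@functional_expand (F^~ _)).
  by apply: eq_bigr => i _; rewrite mxE.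
by move=> k u v; apply: F_bil.1.
Qed.

Lemma mem_radical a : a \in radical F <-> forall w, F a w = 0.
Proof.
rewrite /radical unfold_in /= !genmxE sub_kermx -row_gram; split => [/eqP a0 w|a0].
  rewrite (@functional_expand (F a)); last by move=> k u v; apply: F_bil.2.
  by rewrite big1 // => j _; have /rowP/(_ j) := a0; rewrite !mxE => ->; rewrite mulr0.
by apply/eqP/rowP => j; rewrite !mxE a0.
Qed.

Lemma radical0_unitmx : radical F = 0%VS -> gram F \in unitmx.
Proof.
move=> rad0; rewrite unitmxE unitfE; apply/negP => /det0P [v v_neq0 v_ker].
have : r2v v \in radical F.
  by rewrite /radical unfold_in /= !genmxE r2vK sub_kermx v_ker.
by rewrite rad0 memv0 => /eqP v0; move: v_neq0; rewrite -(r2vK v) v0 linear0 eqxx.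
Qed.

End BilinearForms.

Lemma degenerate_pencil (K : closedFieldType) (V : vectType K) (F G : V -> V -> K) :
    (0 < dim V)%N -> radical F = 0%VS ->
  exists l, radical (fun a b => G a b - l * F a b) != 0%VS.
Proof.
move=> dim_gt0 /radical0_unitmx F_unit.
pose Q := gram G *m invmx (gram F).
have : size (char_poly Q) != 1 by rewrite size_char_poly; case: (dim V) dim_gt0.
move/closed_rootP => [l]; rewrite -eigenvalue_root_char => /eigenvalueP [v v_eig v_neq0].
exists l; set H := fun a b => G a b - l * F a b.
have v_rad : r2v v \in radical H.
  rewrite unfold_in /= !genmxE r2vK sub_kermx.
  have -> : gram H = gram G - l *: gram F by apply/matrixP => i j; rewrite !mxE.
  rewrite mulmxBr -scalemxAr.
  have -> : v *m gram G = (l *: v) *m gram F by rewrite -v_eig -mulmxA mulmxKV.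
  by rewrite -scalemxAl subrr.
apply: contraNneq v_neq0 => rad0.
by move: v_rad; rewrite rad0 memv0 => /eqP v0; rewrite -(r2vK v) v0 linear0.
Qed.

Section InvariantForms.
Variables (R : realType) (V : vectType R[i]) (p0 : V -> V) (br : V -> V -> V).

Definition even_form (F : V -> V -> R[i]) : Prop :=
  forall i j a b, homog p0 i a -> homog p0 j b -> i != j -> F a b = 0.

Definition invariant_form (F : V -> V -> R[i]) : Prop :=
  forall a b c, F (br a b) c = F a (br b c).

Definition invariant_even_form (F : V -> V -> R[i]) : Prop :=
  [/\ bilinear_form F, even_form F & invariant_form F].

Lemma invariant_even_formB (l : R[i]) (F G : V -> V -> R[i]) :
    invariant_even_form F -> invariant_even_form G ->
  invariant_even_form (fun a b => G a b - l * F a b).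
Proof.
move=> [[F_l F_r] F_even F_inv] [[G_l G_r] G_even G_inv]; split.
- by split=> k a a' b; rewrite ?F_l ?G_l ?F_r ?G_r mulrDr mulrCA opprD addrACA mulrBr.
- by move=> i j a b ai bj ij; rewrite (F_even i j) ?(G_even i j) ?mulr0 ?subr0.
- by move=> a b c; rewrite F_inv G_inv.
Qed.

Lemma conj_twist_invariant_even_form (phi : V -> V) (F : V -> V -> R[i]) :
    conj_linear_involution p0 br phi -> invariant_even_form F ->
  invariant_even_form (fun a b => (F (phi a) (phi b))^*).
Proof.
move=> [phiD [phiZ [phi_homog [_ [phi_br _]]]]] [[F_l F_r] F_even F_inv]; split.
- by split=> k a a' b; rewrite phiD phiZ ?F_l ?F_r rmorphD rmorphM /= conjCK.
- move=> i j a b ai bj ij /=.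
  by rewrite (F_even i j _ _ (phi_homog _ _ ai) (phi_homog _ _ bj) ij) conjC0.
- by move=> a b c; rewrite !phi_br F_inv.
Qed.

Hypothesis g_lie : is_lie_superalgebra p0 br.

Lemma p0B a b : p0 (a - b) = p0 a - p0 b.
Proof. by have [[p0_lin _] _] := g_lie; rewrite addrC -scaleN1r p0_lin scaleN1r addrC. Qed.

Lemma homog_p0 a : homog p0 false (p0 a).
Proof. by have [[_ p0_idem] _] := g_lie; rewrite /homog p0_idem. Qed.

Lemma homog_subp0 a : homog p0 true (a - p0 a).
Proof. by have [[_ p0_idem] _] := g_lie; rewrite /homog p0B p0_idem subrr. Qed.

Lemma brDl a a' b : br (a + a') b = br a b + br a' b.
Proof. by have [_ [br_l _]] := g_lie; have := br_l 1 a a' b; rewrite !scale1r. Qed.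

Lemma brDr a b b' : br a (b + b') = br a b + br a b'.
Proof. by have [_ [_ [br_r _]]] := g_lie; have := br_r 1 a b b'; rewrite !scale1r. Qed.

Lemma even_form_p0 F a b : bilinear_form F -> even_form F -> F (p0 a) b = F a (p0 b).
Proof.
move=> F_bil F_even.
rewrite -[X in F (p0 a) X](subrK (p0 b)) -[X in F X (p0 b)](subrK (p0 a)).
rewrite (formDr F_bil) (formDl F_bil (a - p0 a)).
rewrite (F_even _ _ _ _ (homog_p0 a) (homog_subp0 b)) //.
by rewrite (F_even _ _ _ _ (homog_subp0 a) (homog_p0 b)) // !add0r.
Qed.

Lemma radical_graded_ideal F : invariant_even_form F -> graded_ideal p0 br (radical F).
Proof.
move=> [F_bil F_even F_inv].
have p0_rad v : v \in radical F -> p0 v \in radical F.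
  move/(mem_radical F_bil) => v_rad; apply/(mem_radical F_bil) => w.
  by rewrite even_form_p0.
have br_homog_rad i j a v :
    homog p0 i a -> homog p0 j v -> v \in radical F -> br a v \in radical F.
  move=> ai vj /(mem_radical F_bil) v_rad; apply/(mem_radical F_bil) => w.
  have [_ [_ [_ [_ [br_anti _]]]]] := g_lie.
  by rewrite (br_anti i j) // -scaleNr formZl // F_inv v_rad mulr0.
split=> // a v v_rad.
have odd_rad : v - p0 v \in radical F by rewrite rpredB ?p0_rad.
have -> : br a v = br (a - p0 a) (v - p0 v) + br (a - p0 a) (p0 v)
    + (br (p0 a) (v - p0 v) + br (p0 a) (p0 v)).
  by rewrite -!brDr -brDl !subrK.
by rewrite !rpredD //; apply: br_homog_rad;
  first [exact: homog_p0 | exact: homog_subp0 | exact: odd_rad | exact: p0_rad].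
Qed.

End InvariantForms.

Section SimpleSuperalgebra.
Variables (R : realType) (V : vectType R[i]) (p0 : V -> V) (br : V -> V -> V).
Hypothesis g_simple : simple_lie_superalgebra p0 br.

Lemma radical_eq0 F x y : invariant_even_form p0 br F -> F x y != 0 -> radical F = 0%VS.
Proof.
move=> F_inv Fxy_neq0; have [g_lie [_ g_ideals]] := g_simple.
have [F_bil _ _] := F_inv.
case: (g_ideals _ (radical_graded_ideal g_lie F_inv)) => // rad_full.
have : x \in radical F by rewrite rad_full memvf.
by move/(mem_radical F_bil)/(_ y)/eqP; rewrite (negbTE Fxy_neq0).
Qed.

Lemma invariant_forms_proportional F G x y :
    invariant_even_form p0 br F -> invariant_even_form p0 br G -> F x y != 0 ->
  exists l, forall a b, G a b = l * F a b.
Proof.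
move=> F_inv G_inv Fxy_neq0; have [g_lie [_ g_ideals]] := g_simple.
have [F_bil _ _] := F_inv.
have dim_gt0 : (0 < dim V)%N.
  rewrite -dimvf lt0n dimv_eq0; apply: contraNneq Fxy_neq0 => full0.
  have : x \in fullv by rewrite memvf.
  by rewrite full0 memv0 => /eqP ->; rewrite -(scale0r 0) formZl ?mul0r.
have [l H_rad] := degenerate_pencil G dim_gt0 (radical_eq0 F_inv Fxy_neq0).
have H_inv := invariant_even_formB l F_inv G_inv; have [H_bil _ _] := H_inv.
case: (g_ideals _ (radical_graded_ideal g_lie H_inv)) => [H_rad0|H_full].
  by rewrite H_rad0 eqxx in H_rad.
exists l => a b; have : a \in radical (fun a b => G a b - l * F a b).
  by rewrite H_full memvf.
by move/(mem_radical H_bil)/(_ b)/eqP; rewrite subr_eq0 => /eqP.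
Qed.

End SimpleSuperalgebra.

Theorem lemma3p1 (R : realType) (V : vectType R[i])
    (p0 : V -> V) (br : V -> V -> V) (form : V -> V -> R[i])
    (phi : V -> V) (x : V) :
  simple_lie_superalgebra p0 br ->
  invariant_supersymmetric_form p0 br form ->
  conj_linear_involution p0 br phi ->
  form x x \is Num.real -> form x x != 0 -> phi x = x ->
  forall a b : V, (form (phi a) (phi b))^* = form a b.
Proof.
move=> g_simple [form_l [form_r [form_even [_ form_inv]]]] phi_inv xx_real xx_neq0 phi_x.
have form_ie : invariant_even_form p0 br form by split.
have [l twisted] := invariant_forms_proportional g_simple form_ie
  (conj_twist_invariant_even_form phi_inv form_ie) xx_neq0.
have l1 : l = 1.
  have := twisted x x; rewrite phi_x (conj_Creal xx_real) -{1}[form x x]mul1r.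
  by move/(mulIf xx_neq0).
by move=> a b; rewrite twisted l1 mul1r.
Qed.
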